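(* Let $\varphi$ be a hexagonal grid whose reference triangle $T=(A,B,C)$ is nondegenerate and counterclockwise. Then every triangle of the grid that is nondegenerate and counterclockwise (as listed in the grid) has second isodynamic point equal to $X_{16}(T)$.
   Context: Let $\zeta=e^{i\pi/3}$ and $\Lambda=\{m+n\zeta: m,n\in\mathbb{Z}\}$. Call $p,q\in\Lambda$ adjacent if $|p-q|=1$, and let $\mathcal{E}$ be the set of unordered pairs $\{p,q\}$ of adjacent lattice points. A hexagonal grid is a map $\varphi:\mathcal{E}\to\mathbb{C}$ such that for every $p\in\Lambda$ there exist $c_p,r_p\in\mathbb{C}$ with $\varphi(\{p,p+\zeta^k\})=c_p+r_p\zeta^k$ for $k=0,\dots,5$. Thus the six points form a regular, possibly degenerate, hexagon $H_p$ listed counterclockwise. For each set $\{p,q,s\}\subset\Lambda$ of three pairwise adjacent lattice points listed counterclockwise, the corresponding triangle of the grid is $(\varphi(\{p,q\}),\varphi(\{q,s\}),\varphi(\{s,p\}))$. The reference triangle of $\varphi$ is $(\varphi(\{0,1\}),\varphi(\{1,\zeta\}),\varphi(\{\zeta,0\}))$. For a nondegenerate triangle with vertices $V_1,V_2,V_3$, let $\ell_i$ be the length of the side opposite $V_i$ and $\theta_i$ the angle at $V_i$. Its second isodynamic point $X_{16}$ has homogeneous barycentric coordinates $(\ell_1\sin(\theta_1-\pi/3):\ell_2\sin(\theta_2-\pi/3):\ell_3\sin(\theta_3-\pi/3))$. *)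

From Stdlib Require Import Reals ZArith.
From Coquelicot Require Import Coquelicot.

Open Scope C_scope.

Definition zeta : C := (cos (PI / 3), sin (PI / 3))%R.

Definition in_lattice (z : C) : Prop :=
  exists m n : Z, z = RtoC (IZR m) + RtoC (IZR n) * zeta.

Definition adjacent (p q : C) : Prop := Cmod (p - q) = 1%R.

(* A map on unordered pairs of adjacent lattice points is modelled as a
   function phi : C -> C -> C that is symmetric on adjacent lattice pairs
   (its values elsewhere are irrelevant). *)
Definition hexagonal_grid (phi : C -> C -> C) : Prop :=
  (forall p q, in_lattice p -> in_lattice q -> adjacent p q -> phi p q = phi q p) /\
  (forall p, in_lattice p ->
     exists c r : C, forall k : nat, (k < 6)%nat ->
       phi p (p + zeta ^ k) = c + r * zeta ^ k).

(* signed area (times 2) of (A,B,C): positive iff counterclockwise *)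
Definition orient (A B D : C) : R := Im (Cconj (B - A) * (D - A)).
Definition nondegenerate (A B D : C) : Prop := orient A B D <> 0%R.
Definition ccw (A B D : C) : Prop := (0 < orient A B D)%R.

Definition angle_at (V1 V2 V3 : C) : R :=
  acos (Re ((V2 - V1) * Cconj (V3 - V1)) / (Cmod (V2 - V1) * Cmod (V3 - V1))).

Definition x16_weight (V1 V2 V3 : C) : R :=
  (Cmod (V2 - V3) * sin (angle_at V1 V2 V3 - PI / 3))%R.

(* P is the (finite) point with homogeneous barycentric coordinates
   (w1 : w2 : w3) of X_16 w.r.t. (V1,V2,V3). *)
Definition is_X16 (V1 V2 V3 P : C) : Prop :=
  let w1 := x16_weight V1 V2 V3 in
  let w2 := x16_weight V2 V3 V1 in
  let w3 := x16_weight V3 V1 V2 in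
  (w1 + w2 + w3)%R <> 0%R /\
  RtoC (w1 + w2 + w3) * P = RtoC w1 * V1 + RtoC w2 * V2 + RtoC w3 * V3.

From Stdlib Require Import Reals ZArith Lra Lia.
From Coquelicot Require Import Coquelicot.
Open Scope C_scope.

(* A hexagonal grid is given around each lattice point p by a centre c_p and a radius
   r_p, and the symmetry of phi on edges forces c_q - c_p = (r_p + r_q) (q - p).
   Propagating this relation around the lattice triangles shows that r is affine and c
   quadratic, i.e. phi (x, y) = c0 + a (x + y) + b x y on every edge.  If b = 0 the
   reference triangle is equilateral, so it has no X16.  Otherwise
   phi (x, y) = K + (a + b x) (a + b y) / b with K = c0 - a^2 / b, so every grid triangle
   is the image under z |-> K + z / b of a triangle (u v, v w, w u) with v = u + t and
   w = u + zeta t.  The X16 weights of such a triangle annihilate its vertices, so its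
   X16 is 0, and the X16 of every grid triangle is K. *)

Lemma sqrt3_sq : (sqrt 3 * sqrt 3 = 3)%R.
Proof. apply sqrt_sqrt; lra. Qed.

Lemma zeta_eq : zeta = (1 / 2, sqrt 3 / 2)%R.
Proof. unfold zeta; rewrite cos_PI3, sin_PI3; reflexivity. Qed.

(* Replaces [sqrt 3] in the goal by a variable [s] with [s * s = 3], so that
   [field [Hs]] decides the resulting polynomial identities. *)
Ltac abstract_sqrt3 :=
  rewrite ?zeta_eq; generalize sqrt3_sq; generalize (sqrt 3); intros ?s ?Hs.

Lemma Cmod_sqr (z : C) : (Cmod z ^ 2 = fst z * fst z + snd z * snd z)%R.
Proof. rewrite Cmod2_alt; unfold Re, Im; ring. Qed.

Lemma Cmod_sub_sym (x y : C) : Cmod (x - y) = Cmod (y - x).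
Proof. replace (x - y) with (- (y - x)) by ring; apply Cmod_opp. Qed.

Lemma RtoC_neq_0 (x : R) : x <> 0%R -> RtoC x <> 0.
Proof. intros Hx Hc; apply Hx; now injection Hc. Qed.

Lemma Cmult_reg_l (k x y : C) : k <> 0 -> k * x = k * y -> x = y.
Proof.
  intros Hk H.
  rewrite <- (Cmult_1_l x), <- (Cmult_1_l y), <- (Cinv_l k Hk), <- !Cmult_assoc, H.
  reflexivity.
Qed.

Lemma zeta_sq : zeta * zeta = zeta - 1.
Proof. abstract_sqrt3; apply injective_projections; simpl; field [Hs]. Qed.

Lemma zeta_pow3 : zeta ^ 3 = - (1).
Proof.
  replace (zeta ^ 3) with (zeta * zeta * zeta) by (simpl; ring).
  rewrite zeta_sq; replace ((zeta - 1) * zeta) with (zeta * zeta - zeta) by ring.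
  rewrite zeta_sq; ring.
Qed.

Lemma zeta_pow6 : zeta ^ 6 = 1.
Proof. change 6%nat with (3 * 2)%nat; rewrite Cpow_mult_r, zeta_pow3; ring. Qed.

Lemma Cmod_zeta : Cmod zeta = 1%R.
Proof.
  unfold Cmod, zeta; simpl; transitivity (sqrt 1); [f_equal | apply sqrt_1].
  pose proof (sin2_cos2 (PI / 3)); unfold Rsqr in *; nra.
Qed.

Definition is_barycenter (w1 w2 w3 : R) (V1 V2 V3 P : C) : Prop :=
  (w1 + w2 + w3)%R <> 0%R /\
  RtoC (w1 + w2 + w3) * P = RtoC w1 * V1 + RtoC w2 * V2 + RtoC w3 * V3.

Lemma is_barycenter_scale (k w1 w2 w3 : R) (V1 V2 V3 P : C) : k <> 0%R ->
  is_barycenter (w1 * k) (w2 * k) (w3 * k) V1 V2 V3 P <->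
  is_barycenter w1 w2 w3 V1 V2 V3 P.
Proof.
  intros Hk; unfold is_barycenter.
  replace (w1 * k + w2 * k + w3 * k)%R with ((w1 + w2 + w3) * k)%R by ring.
  rewrite !RtoC_mult; split; intros [Hw HP]; split.
  - intros Hs; apply Hw; rewrite Hs; ring.
  - apply (Cmult_reg_l (RtoC k)); [now apply RtoC_neq_0|].
    transitivity (RtoC (w1 + w2 + w3) * RtoC k * P); [ring|]; rewrite HP; ring.
  - now apply Rmult_integral_contrapositive.
  - transitivity (RtoC (w1 + w2 + w3) * P * RtoC k); [ring|]; rewrite HP; ring.
Qed.

Lemma is_barycenter_unique (w1 w2 w3 : R) (V1 V2 V3 P Q : C) :
  is_barycenter w1 w2 w3 V1 V2 V3 P -> is_barycenter w1 w2 w3 V1 V2 V3 Q -> P = Q.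
Proof.
  intros [Hw HP] [_ HQ]; rewrite <- HQ in HP.
  exact (Cmult_reg_l _ _ _ (RtoC_neq_0 _ Hw) HP).
Qed.

Lemma is_barycenter_similarity (w1 w2 w3 : R) (K b V1 V2 V3 P : C) :
  is_barycenter w1 w2 w3 V1 V2 V3 P ->
  is_barycenter w1 w2 w3 (K + b * V1) (K + b * V2) (K + b * V3) (K + b * P).
Proof.
  intros [Hw HP]; split; [exact Hw|].
  transitivity (RtoC (w1 + w2 + w3) * K + b * (RtoC (w1 + w2 + w3) * P)); [ring|].
  rewrite HP, !RtoC_plus; ring.
Qed.

Lemma orient_cycle (V1 V2 V3 : C) : orient V2 V3 V1 = orient V1 V2 V3.
Proof. unfold orient; destruct V1, V2, V3; simpl; ring. Qed.

Lemma orient_pos_side (V1 V2 V3 : C) : (0 < orient V1 V2 V3)%R -> (0 < Cmod (V1 - V2))%R.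
Proof.
  intros Ho; apply Cmod_gt_0; intros He.
  assert (V2 = V1) as -> by (apply Ceq_minus in He; now symmetry).
  replace (orient V1 V1 V3) with 0%R in Ho by (unfold orient; destruct V1, V3; simpl; ring).
  lra.
Qed.

(* [x16_weight] multiplied by the positive, cyclically symmetric factor
   [2 l1 l2 l3]: for a counterclockwise triangle, [sin theta_1 = orient / (l2 l3)]
   and [cos theta_1 = Re ((V2 - V1) * conj (V3 - V1)) / (l2 l3)]. *)
Definition x16_num (V1 V2 V3 : C) : R :=
  (Cmod (V2 - V3) ^ 2 * (orient V1 V2 V3 - sqrt 3 * Re ((V2 - V1) * Cconj (V3 - V1))))%R.

Lemma x16_weight_eq (V1 V2 V3 : C) : (0 < orient V1 V2 V3)%R ->
  x16_weight V1 V2 V3 =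
  (x16_num V1 V2 V3 / (2 * (Cmod (V2 - V3) * Cmod (V3 - V1) * Cmod (V1 - V2))))%R.
Proof.
  intros Ho.
  pose proof (orient_pos_side V1 V2 V3 Ho) as H12.
  pose proof (orient_pos_side V2 V3 V1 ltac:(now rewrite orient_cycle)) as H23.
  pose proof (orient_pos_side V3 V1 V2 ltac:(now rewrite 2!orient_cycle)) as H31.
  unfold x16_num, x16_weight, angle_at; rewrite (Cmod_sub_sym V2 V1).
  set (S := orient V1 V2 V3) in *; set (D := Re ((V2 - V1) * Cconj (V3 - V1))).
  set (l1 := Cmod (V2 - V3)) in *; set (l2 := Cmod (V3 - V1)) in *;
    set (l3 := Cmod (V1 - V2)) in *.
  assert (Lagrange : (D ^ 2 + S ^ 2 = l3 ^ 2 * l2 ^ 2)%R).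
  { unfold D, S, l2, l3, orient; rewrite !Cmod_sqr.
    destruct V1, V2, V3; simpl; ring. }
  assert (Hl2 : l2 <> 0%R) by lra; assert (Hl3 : l3 <> 0%R) by lra.
  set (t := (D / (l3 * l2))%R).
  assert (Hsin : (1 - t² = Rsqr (S / (l3 * l2)))%R).
  { replace 1%R with ((D ^ 2 + S ^ 2) / (l3 ^ 2 * l2 ^ 2))%R by (rewrite Lagrange; field; lra).
    unfold t, Rsqr; field; lra. }
  assert (Ht : (-1 <= t <= 1)%R).
  { pose proof (Rle_0_sqr (S / (l3 * l2))) as Hpos; unfold Rsqr in *.
    split; nra. }
  rewrite sin_minus, cos_acos, sin_acos, Hsin, sqrt_Rsqr, cos_PI3, sin_PI3 by
    (try apply Rlt_le, Rdiv_lt_0_compat; nra).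
  unfold t; field; lra.
Qed.

Lemma is_X16_iff_num (V1 V2 V3 P : C) : (0 < orient V1 V2 V3)%R ->
  is_X16 V1 V2 V3 P <->
  is_barycenter (x16_num V1 V2 V3) (x16_num V2 V3 V1) (x16_num V3 V1 V2) V1 V2 V3 P.
Proof.
  intros Ho.
  assert (Ho2 : (0 < orient V2 V3 V1)%R) by now rewrite orient_cycle.
  assert (Ho3 : (0 < orient V3 V1 V2)%R) by now rewrite orient_cycle.
  change (is_X16 V1 V2 V3 P) with
    (is_barycenter (x16_weight V1 V2 V3) (x16_weight V2 V3 V1) (x16_weight V3 V1 V2)
       V1 V2 V3 P).
  rewrite !x16_weight_eq by assumption; unfold Rdiv.
  replace (2 * (Cmod (V3 - V1) * Cmod (V1 - V2) * Cmod (V2 - V3)))%R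
    with (2 * (Cmod (V2 - V3) * Cmod (V3 - V1) * Cmod (V1 - V2)))%R by ring.
  replace (2 * (Cmod (V1 - V2) * Cmod (V2 - V3) * Cmod (V3 - V1)))%R
    with (2 * (Cmod (V2 - V3) * Cmod (V3 - V1) * Cmod (V1 - V2)))%R by ring.
  apply is_barycenter_scale, Rinv_neq_0_compat, Rgt_not_eq.
  pose proof (orient_pos_side V1 V2 V3 Ho); pose proof (orient_pos_side V2 V3 V1 Ho2);
    pose proof (orient_pos_side V3 V1 V2 Ho3).
  repeat apply Rmult_lt_0_compat; lra.
Qed.

Lemma is_X16_unique (V1 V2 V3 P P' : C) :
  is_X16 V1 V2 V3 P -> is_X16 V1 V2 V3 P' -> P = P'.
Proof. apply is_barycenter_unique. Qed.

Lemma orient_similarity (K b V1 V2 V3 : C) :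
  orient (K + b * V1) (K + b * V2) (K + b * V3) = (Cmod b ^ 2 * orient V1 V2 V3)%R.
Proof. unfold orient; rewrite Cmod_sqr; destruct K, b, V1, V2, V3; simpl; ring. Qed.

Lemma x16_num_similarity (K b V1 V2 V3 : C) :
  x16_num (K + b * V1) (K + b * V2) (K + b * V3) = (x16_num V1 V2 V3 * Cmod b ^ 4)%R.
Proof.
  unfold x16_num, orient; replace (Cmod b ^ 4)%R with (Cmod b ^ 2 * Cmod b ^ 2)%R by ring.
  rewrite !Cmod_sqr; destruct K, b, V1, V2, V3; simpl; ring.
Qed.

Lemma similarity_ccw (K b V1 V2 V3 : C) :
  (0 < orient (K + b * V1) (K + b * V2) (K + b * V3))%R ->
  (0 < Cmod b ^ 2)%R /\ (0 < orient V1 V2 V3)%R.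
Proof.
  rewrite orient_similarity; intros Ho.
  assert (Hb : (0 < Cmod b ^ 2)%R).
  { destruct (pow2_ge_0 (Cmod b)) as [|Hb0]; [assumption|].
    rewrite <- Hb0 in Ho; lra. }
  split; [exact Hb | nra].
Qed.

Lemma is_X16_similarity (K b V1 V2 V3 P : C) :
  (0 < orient (K + b * V1) (K + b * V2) (K + b * V3))%R ->
  is_X16 V1 V2 V3 P -> is_X16 (K + b * V1) (K + b * V2) (K + b * V3) (K + b * P).
Proof.
  intros Ho; destruct (similarity_ccw _ _ _ _ _ Ho) as [Hb Ho'].
  rewrite !is_X16_iff_num by assumption.
  assert (Hb4 : (Cmod b ^ 4 <> 0)%R).
  { replace (Cmod b ^ 4)%R with (Cmod b ^ 2 * Cmod b ^ 2)%R by ring; apply Rgt_not_eq; nra. }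
  rewrite !x16_num_similarity, is_barycenter_scale by exact Hb4.
  apply is_barycenter_similarity.
Qed.

Section ProductTriangle.
Variables u t : C.
Let v := u + t.
Let w := u + zeta * t.

Lemma x16_num_product_sum :
  (x16_num (u * v) (v * w) (w * u) + x16_num (v * w) (w * u) (u * v) +
   x16_num (w * u) (u * v) (v * w) = 2 * Cmod t ^ 4 * orient (u * v) (v * w) (w * u))%R.
Proof.
  replace (Cmod t ^ 4)%R with (Cmod t ^ 2 * Cmod t ^ 2)%R by ring.
  unfold x16_num, orient, v, w; rewrite !Cmod_sqr; abstract_sqrt3.
  destruct u, t; simpl; field [Hs].
Qed.

Lemma x16_num_product_moment :
  RtoC (x16_num (u * v) (v * w) (w * u)) * (u * v) +
  RtoC (x16_num (v * w) (w * u) (u * v)) * (v * w) +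
  RtoC (x16_num (w * u) (u * v) (v * w)) * (w * u) = 0.
Proof.
  unfold x16_num, orient, v, w; rewrite !Cmod_sqr; abstract_sqrt3.
  destruct u, t; unfold RtoC; apply injective_projections; simpl; field [Hs].
Qed.

Lemma is_X16_product_triangle :
  (0 < orient (u * v) (v * w) (w * u))%R -> is_X16 (u * v) (v * w) (w * u) 0.
Proof.
  intros Ho; apply is_X16_iff_num; [exact Ho|]; split.
  - rewrite x16_num_product_sum.
    destruct (Ceq_dec t 0) as [Ht | Ht].
    + exfalso; revert Ho; unfold v, w; rewrite Ht.
      unfold orient; destruct u; simpl; lra.
    + apply Cmod_gt_0 in Ht; apply Rgt_not_eq.
      apply Rmult_lt_0_compat; [|exact Ho]; apply Rmult_lt_0_compat; [lra | now apply pow_lt].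
  - rewrite Cmult_0_r; symmetry; apply x16_num_product_moment.
Qed.
End ProductTriangle.

Lemma x16_num_sum_equilateral (p q : C) :
  let s := p + zeta * (q - p) in
  (x16_num p q s + x16_num q s p + x16_num s p q = 0)%R.
Proof.
  intros s; unfold s, x16_num, orient; rewrite !Cmod_sqr; abstract_sqrt3.
  destruct p, q; simpl; field [Hs].
Qed.

(* All three angles equal [pi/3], so every weight of [X16] vanishes. *)
Lemma equilateral_no_X16 (p q s P : C) :
  s = p + zeta * (q - p) -> (0 < orient p q s)%R -> ~ is_X16 p q s P.
Proof.
  intros Hs Ho HX; apply is_X16_iff_num in HX as [Hw _]; [|exact Ho].
  apply Hw; rewrite Hs; apply x16_num_sum_equilateral.
Qed.

Definition quadratic_grid (c a b x y : C) : C := c + a * (x + y) + b * x * y.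

Lemma quadratic_grid_square (c a b x y : C) : b <> 0 ->
  quadratic_grid c a b x y = (c - a * a / b) + / b * ((a + b * x) * (a + b * y)).
Proof. intros Hb; unfold quadratic_grid; field; exact Hb. Qed.

Lemma quadratic_grid_X16 (c a b p q s : C) :
  b <> 0 -> s = p + zeta * (q - p) ->
  let Q := quadratic_grid c a b in
  (0 < orient (Q p q) (Q q s) (Q s p))%R -> is_X16 (Q p q) (Q q s) (Q s p) (c - a * a / b).
Proof.
  intros Hb Hs Q Ho; unfold Q in *.
  rewrite !quadratic_grid_square in * by exact Hb.
  set (u := a + b * p) in *; set (t := b * (q - p)).
  replace (a + b * q) with (u + t) in * by (unfold u, t; ring).
  replace (a + b * s) with (u + zeta * t) in * by (rewrite Hs; unfold u, t; ring).
  pose proof (is_X16_product_triangle u t (proj2 (similarity_ccw _ _ _ _ _ Ho))) as HX.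
  pose proof (is_X16_similarity _ _ _ _ _ _ Ho HX) as HK.
  rewrite Cmult_0_r, Cplus_0_r in HK; exact HK.
Qed.

Lemma affine_grid_reference_equilateral (c a : C) :
  let Q := quadratic_grid c a 0 in Q zeta 0 = Q 0 1 + zeta * (Q 1 zeta - Q 0 1).
Proof.
  unfold quadratic_grid; transitivity (c + a + a * (zeta * zeta)); [rewrite zeta_sq|]; ring.
Qed.

Definition lattice_point (m n : Z) : C := RtoC (IZR m) + RtoC (IZR n) * zeta.

Lemma lattice_point_sub (m n m' n' : Z) :
  lattice_point m' n' - lattice_point m n = lattice_point (m' - m) (n' - n).
Proof. unfold lattice_point; rewrite !minus_IZR, !RtoC_minus; ring. Qed.

Lemma lattice_point_rot (m n : Z) : zeta * lattice_point m n = lattice_point (- n) (m + n).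
Proof.
  unfold lattice_point; rewrite opp_IZR, plus_IZR, RtoC_plus, RtoC_opp.
  transitivity (RtoC (IZR m) * zeta + RtoC (IZR n) * (zeta * zeta)); [ring|].
  rewrite zeta_sq; ring.
Qed.

Lemma lattice_point_Cmod_sqr (m n : Z) :
  (Cmod (lattice_point m n) ^ 2 = IZR (m * m + m * n + n * n))%R.
Proof.
  rewrite Cmod_sqr, !plus_IZR, !mult_IZR; unfold lattice_point.
  abstract_sqrt3; simpl; field [Hs].
Qed.

Definition unit_vector (u : C) : Prop := exists k : nat, u = zeta ^ k.

Lemma unit_vector_1 : unit_vector 1.
Proof. now exists 0%nat. Qed.

Lemma unit_vector_zeta : unit_vector zeta.
Proof. exists 1%nat; now rewrite Cpow_1_r. Qed.

Lemma unit_vector_mul (u v : C) : unit_vector u -> unit_vector v -> unit_vector (u * v).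
Proof. intros [k ->] [j ->]; exists (k + j)%nat; now rewrite Cpow_add_r. Qed.

Lemma unit_vector_opp (u : C) : unit_vector u -> unit_vector (- u).
Proof.
  intros Hu; replace (- u) with (zeta ^ 3 * u) by (rewrite zeta_pow3; ring).
  apply unit_vector_mul; [now exists 3%nat | exact Hu].
Qed.

Lemma unit_vector_ratio (u v : C) :
  unit_vector u -> unit_vector v -> exists k : nat, v = zeta ^ k * u.
Proof.
  intros [m ->] [j ->]; exists (j + 5 * m)%nat.
  rewrite <- Cpow_add_r, <- Nat.add_assoc, Cpow_add_r.
  replace (5 * m + m)%nat with (6 * m)%nat by lia.
  rewrite Cpow_mult_r, zeta_pow6, Cpow_1_l; ring.
Qed.

Lemma unit_vector_bounded (u : C) :
  unit_vector u -> exists k : nat, (k < 6)%nat /\ u = zeta ^ k.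
Proof.
  intros [k ->]; induction k as [k IH] using lt_wf_ind.
  destruct (Nat.lt_ge_cases k 6) as [Hk | Hk]; [now exists k|].
  replace k with (6 + (k - 6))%nat by lia.
  rewrite Cpow_add_r, zeta_pow6, Cmult_1_l; apply IH; lia.
Qed.

Lemma unit_vector_Cmod (u : C) : unit_vector u -> Cmod u = 1%R.
Proof. intros [k ->]; rewrite Cmod_pow, Cmod_zeta; apply pow1. Qed.

Lemma unit_vector_neq_0 (u : C) : unit_vector u -> u <> 0.
Proof. intros Hu Hc; apply unit_vector_Cmod in Hu; rewrite Hc, Cmod_0 in Hu; lra. Qed.

Lemma unit_vector_in_lattice (u : C) : unit_vector u -> in_lattice u.
Proof.
  intros [k ->]; induction k as [|k [m [n IH]]].
  - exists 1%Z, 0%Z; simpl; ring.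
  - exists (- n)%Z, (m + n)%Z; rewrite Cpow_S; fold (lattice_point m n) in IH.
    rewrite IH; apply lattice_point_rot.
Qed.

Lemma in_lattice_0 : in_lattice 0.
Proof. exists 0%Z, 0%Z; simpl; ring. Qed.

Lemma in_lattice_add_unit_vector (x u : C) :
  in_lattice x -> unit_vector u -> in_lattice (x + u).
Proof.
  intros [m [n ->]] Hu; destruct (unit_vector_in_lattice u Hu) as [i [j ->]].
  exists (m + i)%Z, (n + j)%Z; rewrite !plus_IZR, !RtoC_plus; ring.
Qed.

Lemma unit_vector_of_norm (m n : Z) :
  (m * m + m * n + n * n = 1)%Z -> unit_vector (lattice_point m n).
Proof.
  intros Hmn.
  assert (Hm : (-1 <= m <= 1)%Z) by nia; assert (Hn : (-1 <= n <= 1)%Z) by nia.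
  assert (Hcases : (m = 1 /\ n = 0 \/ m = 0 /\ n = 1 \/ m = -1 /\ n = 1 \/
                    m = -1 /\ n = 0 \/ m = 0 /\ n = -1 \/ m = 1 /\ n = -1)%Z) by nia.
  destruct Hcases as [[-> ->] | [[-> ->] | [[-> ->] | [[-> ->] | [[-> ->] | [-> ->]]]]]];
    [exists 0%nat | exists 1%nat | exists 2%nat | exists 3%nat | exists 4%nat | exists 5%nat];
    unfold lattice_point; abstract_sqrt3; apply injective_projections; simpl; field [Hs].
Qed.

Lemma adjacent_unit_vector (x y : C) :
  in_lattice x -> in_lattice y -> adjacent x y -> unit_vector (y - x).
Proof.
  intros [m [n ->]] [m' [n' ->]] Hxy; unfold adjacent in Hxy.
  fold (lattice_point m n) (lattice_point m' n') in *; rewrite lattice_point_sub.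
  apply unit_vector_of_norm, eq_IZR; rewrite <- lattice_point_Cmod_sqr, <- lattice_point_sub.
  rewrite Cmod_sub_sym, Hxy; ring.
Qed.

Lemma unit_triangle_ccw_rotation (p q s : C) : adjacent p q -> adjacent q s -> adjacent s p ->
  (0 < orient p q s)%R -> s = p + zeta * (q - p).
Proof.
  unfold adjacent, orient; intros Hpq Hqs Hsp Ho.
  assert (Ha : (Cmod (q - p) ^ 2 = 1)%R) by (rewrite Cmod_sub_sym, Hpq; ring).
  assert (Hb : (Cmod (s - p) ^ 2 = 1)%R) by (rewrite Hsp; ring).
  assert (Hab : (Cmod ((s - p) - (q - p)) ^ 2 = 1)%R).
  { replace (s - p - (q - p)) with (s - q) by ring; rewrite Cmod_sub_sym, Hqs; ring. }
  transitivity (p + (s - p)); [ring | f_equal].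
  revert Ho Ha Hb Hab; generalize (q - p) (s - p); intros [a1 a2] [b1 b2] Ho Ha Hb Hab.
  rewrite !Cmod_sqr in Ha, Hb, Hab; simpl in *; rewrite zeta_eq.
  assert (Hs3 : (0 < sqrt 3)%R) by (apply sqrt_lt_R0; lra); pose proof sqrt3_sq as Hs.
  assert (Hdot : (a1 * b1 + a2 * b2 = 1 / 2)%R) by nra.
  assert (Hcross : (a1 * b2 - a2 * b1 = sqrt 3 / 2)%R).
  { assert (Hsq : ((a1 * b2 - a2 * b1) ^ 2 = 3 / 4)%R).
    { transitivity ((a1 * a1 + a2 * a2) * (b1 * b1 + b2 * b2) - (a1 * b1 + a2 * b2) ^ 2)%R;
        [ring | rewrite Ha, Hb, Hdot; field]. }
    nra. }
  apply injective_projections; simpl; rewrite <- Hdot, <- Hcross.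
  - transitivity (b1 * (a1 * a1 + a2 * a2))%R; [rewrite Ha |]; ring.
  - transitivity (b2 * (a1 * a1 + a2 * a2))%R; [rewrite Ha |]; ring.
Qed.

Section HexagonalGrid.
Variable phi : C -> C -> C.
Hypothesis phi_grid : hexagonal_grid phi.

Definition grid_center (x : C) : C := (phi x (x + 1) + phi x (x - 1)) / 2.
Definition grid_radius (x : C) : C := (phi x (x + 1) - phi x (x - 1)) / 2.

Lemma grid_edge (x u : C) : in_lattice x -> unit_vector u ->
  phi x (x + u) = grid_center x + grid_radius x * u.
Proof.
  intros Hx Hu; destruct (proj2 phi_grid x Hx) as [c [r Hcr]].
  assert (Hplus : phi x (x + 1) = c + r).
  { transitivity (c + r * zeta ^ 0); [apply (Hcr 0%nat); lia | simpl; ring]. }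
  assert (Hminus : phi x (x - 1) = c - r).
  { replace (x - 1) with (x + zeta ^ 3) by (rewrite zeta_pow3; ring).
    rewrite Hcr, zeta_pow3 by lia; ring. }
  assert (H2 : (2 : C) <> 0) by (apply RtoC_neq_0; lra).
  unfold grid_center, grid_radius; rewrite Hplus, Hminus.
  destruct (unit_vector_bounded u Hu) as [k [Hk ->]]; rewrite Hcr by exact Hk.
  field; exact H2.
Qed.

Lemma grid_center_step (x u : C) : in_lattice x -> unit_vector u ->
  grid_center (x + u) - grid_center x = (grid_radius x + grid_radius (x + u)) * u.
Proof.
  intros Hx Hu.
  assert (Hxu : in_lattice (x + u)) by now apply in_lattice_add_unit_vector.
  pose proof (grid_edge x u Hx Hu) as Hout.
  pose proof (grid_edge (x + u) (- u) Hxu (unit_vector_opp u Hu)) as Hback.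
  replace (x + u + - u) with x in Hback by ring.
  rewrite (proj1 phi_grid) in Hout; [| assumption.. |].
  - rewrite Hout in Hback.
    transitivity (grid_center (x + u) + grid_radius (x + u) * - u - grid_center x
                  + grid_radius (x + u) * u); [ring|].
    rewrite <- Hback; ring.
  - unfold adjacent; replace (x - (x + u)) with (- u) by ring.
    rewrite Cmod_opp; now apply unit_vector_Cmod.
Qed.

Definition grid_c0 : C := grid_center 0.
Definition grid_alpha : C := grid_radius 0.
Definition grid_beta : C := grid_radius 1 - grid_radius 0.

Definition center_defect (x : C) : C :=
  grid_center x - (grid_c0 + 2 * grid_alpha * x + grid_beta * x * x).
Definition radius_defect (x : C) : C := grid_radius x - (grid_alpha + grid_beta * x).

Definition quadratic_at (x : C) : Prop := center_defect x = 0 /\ radius_defect x = 0.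

(* The defects satisfy the same edge relation as [grid_center] and [grid_radius],
   because the quadratic model does. *)
Lemma defect_step (x u : C) : in_lattice x -> unit_vector u ->
  center_defect (x + u) - center_defect x = (radius_defect x + radius_defect (x + u)) * u.
Proof.
  intros Hx Hu; unfold center_defect, radius_defect.
  transitivity (grid_center (x + u) - grid_center x
                - (2 * grid_alpha * u + grid_beta * (2 * x + u) * u)); [ring|].
  rewrite grid_center_step by assumption; ring.
Qed.

(* Along the edges [x -> x + zeta u] and [x + u -> x + zeta u] the two step relations
   differ by [radius_defect (x + zeta u) * u], since [zeta u - (zeta - 1) u = u]. *)
Lemma quadratic_at_rotate (x u : C) : in_lattice x -> unit_vector u ->
  quadratic_at x -> quadratic_at (x + u) -> quadratic_at (x + zeta * u).
Proof.
  intros Hx Hu [Hc0 Hr0] [Hc1 Hr1].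
  assert (Hzu : unit_vector (zeta * u)).
  { apply unit_vector_mul; [apply unit_vector_zeta | exact Hu]. }
  assert (Hzu' : unit_vector ((zeta - 1) * u)).
  { replace ((zeta - 1) * u) with (zeta * (zeta * u)) by (rewrite <- zeta_sq; ring).
    apply unit_vector_mul; [apply unit_vector_zeta | exact Hzu]. }
  pose proof (defect_step x (zeta * u) Hx Hzu) as Hfrom_x.
  pose proof (defect_step (x + u) ((zeta - 1) * u) (in_lattice_add_unit_vector x u Hx Hu) Hzu')
    as Hfrom_xu.
  replace (x + u + (zeta - 1) * u) with (x + zeta * u) in Hfrom_xu by ring.
  rewrite Hc0, Hr0 in Hfrom_x; rewrite Hc1, Hr1 in Hfrom_xu.
  assert (Hr : radius_defect (x + zeta * u) = 0).
  { apply (Cmult_reg_l u); [now apply unit_vector_neq_0|].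
    transitivity ((0 + radius_defect (x + zeta * u)) * (zeta * u)
                  - (0 + radius_defect (x + zeta * u)) * ((zeta - 1) * u)); [ring|].
    rewrite <- Hfrom_x, <- Hfrom_xu; ring. }
  split; [|exact Hr].
  rewrite Hr in Hfrom_x; transitivity (center_defect (x + zeta * u) - 0); [ring|].
  rewrite Hfrom_x; ring.
Qed.

Lemma quadratic_at_around (x u : C) : in_lattice x -> unit_vector u ->
  quadratic_at x -> quadratic_at (x + u) -> forall v, unit_vector v -> quadratic_at (x + v).
Proof.
  intros Hx Hu H0 H1 v Hv; destruct (unit_vector_ratio u v Hu Hv) as [k ->]; clear Hv.
  induction k as [|k IH]; [now rewrite Cmult_1_l|].
  rewrite Cpow_S, <- Cmult_assoc.
  apply quadratic_at_rotate; [exact Hx | | exact H0 | exact IH].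
  apply unit_vector_mul; [now exists k | exact Hu].
Qed.

Definition quadratic_near (x : C) : Prop :=
  quadratic_at x /\ forall u, unit_vector u -> quadratic_at (x + u).

Lemma quadratic_near_step (x v : C) : in_lattice x -> unit_vector v ->
  quadratic_near x -> quadratic_near (x + v).
Proof.
  intros Hx Hv [H0 Hnear]; split; [now apply Hnear|].
  apply (quadratic_at_around (x + v) (- v)).
  - now apply in_lattice_add_unit_vector.
  - now apply unit_vector_opp.
  - now apply Hnear.
  - now replace (x + v + - v) with x by ring.
Qed.

Lemma quadratic_near_origin : quadratic_near 0.
Proof.
  assert (H0 : quadratic_at 0).
  { unfold quadratic_at, center_defect, radius_defect, grid_c0, grid_alpha; split; ring. }
  assert (H1 : quadratic_at (0 + 1)).
  { rewrite Cplus_0_l; split.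
    - pose proof (grid_center_step 0 1 in_lattice_0 unit_vector_1)
        as Hstep.
      rewrite Cplus_0_l in Hstep; unfold center_defect, grid_c0, grid_alpha, grid_beta.
      transitivity (grid_center 1 - grid_center 0 - (grid_radius 0 + grid_radius 1) * 1);
        [ring|].
      rewrite Hstep; ring.
    - unfold radius_defect, grid_alpha, grid_beta; ring. }
  split; [exact H0|].
  exact (quadratic_at_around 0 1 in_lattice_0 unit_vector_1 H0 H1).
Qed.

Lemma quadratic_near_lattice (m n : Z) : quadratic_near (lattice_point m n).
Proof.
  assert (Hlat : forall i j, in_lattice (lattice_point i j)) by (intros i j; now exists i, j).
  induction m as [| m IH | m IH] using Z.peano_ind.
  - induction n as [| n IH | n IH] using Z.peano_ind.
    + replace (lattice_point 0 0) with (0 : C) by (unfold lattice_point; simpl; ring).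
      exact quadratic_near_origin.
    + replace (lattice_point 0 (Z.succ n)) with (lattice_point 0 n + zeta)
        by (unfold lattice_point; rewrite succ_IZR, RtoC_plus; ring).
      apply quadratic_near_step; [apply Hlat | apply unit_vector_zeta | exact IH].
    + replace (lattice_point 0 (Z.pred n)) with (lattice_point 0 n + - zeta)
        by (unfold lattice_point; rewrite <- Z.sub_1_r, minus_IZR, RtoC_minus; ring).
      apply quadratic_near_step; [apply Hlat | | exact IH].
      apply unit_vector_opp, unit_vector_zeta.
  - replace (lattice_point (Z.succ m) n) with (lattice_point m n + 1)
      by (unfold lattice_point; rewrite succ_IZR, RtoC_plus; ring).
    apply quadratic_near_step; [apply Hlat | apply unit_vector_1 | exact IH].
  - replace (lattice_point (Z.pred m) n) with (lattice_point m n + - (1))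
      by (unfold lattice_point; rewrite <- Z.sub_1_r, minus_IZR, RtoC_minus; ring).
    apply quadratic_near_step; [apply Hlat | apply unit_vector_opp, unit_vector_1 | exact IH].
Qed.

Lemma hexagonal_grid_quadratic (x y : C) : in_lattice x -> in_lattice y -> adjacent x y ->
  phi x y = quadratic_grid grid_c0 grid_alpha grid_beta x y.
Proof.
  intros Hx Hy Hxy.
  destruct Hx as [m [n Hx]]; destruct (quadratic_near_lattice m n) as [[Hc Hr] _].
  fold (lattice_point m n) in Hx; rewrite <- Hx in Hc, Hr.
  replace (phi x y) with (phi x (x + (y - x))) by (f_equal; ring).
  rewrite grid_edge by (try apply adjacent_unit_vector; assumption || (exists m, n; exact Hx)).
  unfold center_defect, radius_defect in *; apply Ceq_minus in Hc, Hr; rewrite Hc, Hr.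
  unfold quadratic_grid; ring.
Qed.
End HexagonalGrid.

Theorem mainTheorem7 :
  forall phi : C -> C -> C,
    hexagonal_grid phi ->
    nondegenerate (phi 0 1) (phi 1 zeta) (phi zeta 0) ->
    ccw (phi 0 1) (phi 1 zeta) (phi zeta 0) ->
    forall P : C, is_X16 (phi 0 1) (phi 1 zeta) (phi zeta 0) P ->
    forall p q s : C,
      in_lattice p -> in_lattice q -> in_lattice s ->
      adjacent p q -> adjacent q s -> adjacent s p ->
      ccw p q s ->
      nondegenerate (phi p q) (phi q s) (phi s p) ->
      ccw (phi p q) (phi q s) (phi s p) ->
      is_X16 (phi p q) (phi q s) (phi s p) P.
Proof.
  intros phi Hphi _ Href P HP p q s Hp Hq Hs Hpq Hqs Hsp Hpqs _ Hccw.
  pose proof in_lattice_0 as H0.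
  assert (H1 : in_lattice 1) by apply unit_vector_in_lattice, unit_vector_1.
  assert (Hz : in_lattice zeta) by apply unit_vector_in_lattice, unit_vector_zeta.
  assert (H01 : adjacent 0 1).
  { unfold adjacent; replace (0 - 1) with (- (1)) by ring; now rewrite Cmod_opp, Cmod_1. }
  assert (H1z : adjacent 1 zeta).
  { unfold adjacent; replace (1 - zeta) with (- (zeta * zeta)) by (rewrite zeta_sq; ring).
    rewrite Cmod_opp, Cmod_mult, Cmod_zeta; ring. }
  assert (Hz0 : adjacent zeta 0).
  { unfold adjacent; replace (zeta - 0) with zeta by ring; exact Cmod_zeta. }
  rewrite !(hexagonal_grid_quadratic phi Hphi) in Href, HP, Hccw |- * by assumption.
  assert (Hzeta : zeta = 0 + zeta * (1 - 0)) by ring.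
  destruct (Ceq_dec (grid_beta phi) 0) as [Hb | Hb].
  - rewrite Hb in Href, HP.
    destruct (equilateral_no_X16 _ _ _ P (affine_grid_reference_equilateral _ _) Href HP).
  - rewrite (is_X16_unique _ _ _ _ _ HP (quadratic_grid_X16 _ _ _ 0 1 zeta Hb Hzeta Href)).
    pose proof (unit_triangle_ccw_rotation p q s Hpq Hqs Hsp Hpqs) as Hshape.
    exact (quadratic_grid_X16 _ _ _ p q s Hb Hshape Hccw).
Qed.
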